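(* Let $X_1,\dots,X_N$ be random variables (jointly distributed arbitrarily) with values in $\{1,\dots,Z\}$, with marginals $p_i(z)=\Pr(X_i=z)$ and pooled distribution $P_z=\frac1N\sum_{i=1}^N p_i(z)$. Then $$\mathrm{PI}\le S(P)-\frac{1}{N^2}\sum_{i=1}^N\sum_{j=1}^N I(X_i:X_j),$$ where $I(X_i:X_j)$ is the mutual information (in bits) between $X_i$ and $X_j$, and $S(P)=-\sum_z P_z\log_2P_z$.
   Context: The positional information is $$\mathrm{PI}=\frac1N\sum_{i=1}^N\sum_{z=1}^Z p_i(z)\log_2\frac{p_i(z)}{P_z},$$ with the convention $0\log 0=0$. Shannon entropies and mutual informations are taken in base $2$. *)

From mathcomp Require Import all_boot all_order all_algebra.
From mathcomp Require Import reals exp.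
Set Implicit Arguments. Unset Strict Implicit. Unset Printing Implicit Defensive.
Import Order.TTheory GRing.Theory Num.Theory.
Local Open Scope ring_scope.

Section Defs.
Variables (R : realType) (N Z : nat).

(* A joint distribution of (X_1,...,X_N), each X_i valued in 'I_Z
   (representing {1,...,Z}), is a pmf on outcomes x : 'I_N -> 'I_Z. *)
Definition outcome := {ffun 'I_N -> 'I_Z}.

Definition is_pmf (mu : {ffun outcome -> R}) : Prop :=
  (forall x, 0 <= mu x) /\ \sum_x mu x = 1.

Definition log2 (x : R) : R := ln x / ln 2.

Definition xlogxy (a b : R) : R := if a == 0 then 0 else a * log2 (a / b).

Definition marg (mu : {ffun outcome -> R}) (i : 'I_N) (z : 'I_Z) : R :=
  \sum_(x : outcome | x i == z) mu x.

Definition marg2 (mu : {ffun outcome -> R}) (i j : 'I_N) (a b : 'I_Z) : R :=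
  \sum_(x : outcome | (x i == a) && (x j == b)) mu x.

Definition pooled (mu : {ffun outcome -> R}) (z : 'I_Z) : R :=
  N%:R^-1 * \sum_(i < N) marg mu i z.

Definition PI (mu : {ffun outcome -> R}) : R :=
  N%:R^-1 * \sum_(i < N) \sum_(z < Z) xlogxy (marg mu i z) (pooled mu z).

Definition entropyP (mu : {ffun outcome -> R}) : R :=
  - \sum_(z < Z) (if pooled mu z == 0 then 0 else pooled mu z * log2 (pooled mu z)).

Definition mutinfo (mu : {ffun outcome -> R}) (i j : 'I_N) : R :=
  \sum_(a < Z) \sum_(b < Z) xlogxy (marg2 mu i j a b) (marg mu i a * marg mu j b).

End Defs.

(* Writing p_i for the law of X_i, the defining sum splits as
   PI = S(P) - (1/N) sum_i H(X_i), because sum_i p_i(z) = N P_z.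
   Each mutual information is bounded by an entropy, I(X_i:X_j) <= H(X_i),
   since Pr(X_i = a, X_j = b) <= Pr(X_j = b) makes every term of I(X_i:X_j)
   at most the matching term of H(X_i). Summing over the N^2 pairs gives
   (1/N^2) sum_(i,j) I(X_i:X_j) <= (1/N) sum_i H(X_i). *)
From mathcomp Require Import all_boot all_order all_algebra.
From mathcomp Require Import reals exp.
From mathcomp Require Import lra.
Import Order.TTheory GRing.Theory Num.Theory.
Local Open Scope ring_scope.

Section Log2.
Context {R : realType}.
Implicit Types a b c : R.

Lemma log2_div a b : 0 < a -> 0 < b -> log2 (a / b) = log2 a - log2 b.
Proof. by move=> a0 b0; rewrite /log2 ln_div ?posrE // mulrBl. Qed.

Lemma log2M a b : 0 < a -> 0 < b -> log2 (a * b) = log2 a + log2 b.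
Proof. by move=> a0 b0; rewrite /log2 lnM ?posrE // mulrDl. Qed.

Lemma ler_log2 a b : 0 < a -> a <= b -> log2 a <= log2 b.
Proof.
move=> a0 ab; have b0 := lt_le_trans a0 ab.
rewrite /log2 ler_wpM2r ?ler_ln ?posrE //.
by rewrite invr_ge0 ltW // ln_gt0 // ltr1n.
Qed.

Lemma xlogxyE a b : xlogxy a b = a * log2 (a / b).
Proof. by rewrite /xlogxy; case: eqP => [->|]; rewrite ?mul0r. Qed.

Lemma xlogxy_split a b : 0 <= a -> (0 < a -> 0 < b) ->
  xlogxy a b = a * log2 a - a * log2 b.
Proof.
move=> a_ge0 b_gt0; rewrite xlogxyE.
have [->|a_neq0] := eqVneq a 0; first by rewrite !mul0r subrr.
have a_gt0 : 0 < a by rewrite lt0r a_neq0.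
by rewrite log2_div ?b_gt0 // mulrBr.
Qed.

(* The term-wise comparison behind I(X_i:X_j) <= H(X_i), with
   c = Pr(X_i = a, X_j = b), a = Pr(X_i = a) and b = Pr(X_j = b). *)
Lemma xlogxy_mul_le a b c : 0 <= c -> c <= a -> c <= b ->
  xlogxy c (a * b) <= - (c * log2 a).
Proof.
move=> c_ge0 ca cb.
have [->|c_neq0] := eqVneq c 0; first by rewrite xlogxyE !mul0r oppr0.
have c_gt0 : 0 < c by rewrite lt0r c_neq0.
have a_gt0 := lt_le_trans c_gt0 ca; have b_gt0 := lt_le_trans c_gt0 cb.
rewrite xlogxy_split ?mulr_gt0 // log2M //.
have : c * (log2 c - log2 b) <= 0.
  by rewrite mulr_ge0_le0 // subr_le0 ler_log2.
rewrite mulrBr; lra.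
Qed.

End Log2.

Section Marginals.
Context {R : realType} {N Z : nat} (mu : {ffun outcome N Z -> R}).
Hypothesis mu_ge0 : forall x, 0 <= mu x.

Lemma marg_ge0 i z : 0 <= marg mu i z.
Proof. exact: sumr_ge0. Qed.

Lemma marg2_ge0 i j a b : 0 <= marg2 mu i j a b.
Proof. exact: sumr_ge0. Qed.

Lemma marg2_le_margl i j a b : marg2 mu i j a b <= marg mu i a.
Proof.
rewrite /marg2 /marg [leRHS]big_mkcond [leLHS]big_mkcond.
by apply: ler_sum => x _; case: (x i == a); case: (x j == b).
Qed.

Lemma marg2_le_margr i j a b : marg2 mu i j a b <= marg mu j b.
Proof.
rewrite /marg2 /marg [leRHS]big_mkcond [leLHS]big_mkcond.
by apply: ler_sum => x _; case: (x i == a); case: (x j == b).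
Qed.

Lemma sum_marg2 i j a : \sum_(b < Z) marg2 mu i j a b = marg mu i a.
Proof. by rewrite /marg (partition_big (fun x : outcome N Z => x j) xpredT). Qed.

Definition marg_entropy i : R :=
  - \sum_(a < Z) marg mu i a * log2 (marg mu i a).

Lemma mutinfo_le_entropy i j : mutinfo mu i j <= marg_entropy i.
Proof.
rewrite /mutinfo /marg_entropy -sumrN; apply: ler_sum => a _.
rewrite -[X in X * _](sum_marg2 i j) mulr_suml -sumrN; apply: ler_sum => b _.
by apply: xlogxy_mul_le; rewrite ?marg2_ge0 ?marg2_le_margl ?marg2_le_margr.
Qed.

Lemma sum_mutinfo_le :
  \sum_(i < N) \sum_(j < N) mutinfo mu i j <= N%:R * \sum_(i < N) marg_entropy i.
Proof.
rewrite mulr_sumr; apply: ler_sum => i _.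
have -> : N%:R * marg_entropy i = \sum_(j < N) marg_entropy i.
  by rewrite sumr_const card_ord mulr_natl.
by apply: ler_sum => j _; apply: mutinfo_le_entropy.
Qed.

Hypothesis N_gt0 : (0 < N)%N.

Let N_neq0 : (N%:R : R) != 0. Proof. by rewrite pnatr_eq0 -lt0n. Qed.

Lemma sum_marg_pooled z : \sum_(i < N) marg mu i z = N%:R * pooled mu z.
Proof. by rewrite /pooled mulrA mulfV ?mul1r. Qed.

Lemma marg_le_pooled i z : marg mu i z <= N%:R * pooled mu z.
Proof.
rewrite -sum_marg_pooled (bigD1 i) //= lerDl.
by apply: sumr_ge0 => k _; apply: marg_ge0.
Qed.

Lemma entropyPE :
  entropyP mu = - \sum_(z < Z) pooled mu z * log2 (pooled mu z).
Proof.
by congr (- _); apply: eq_bigr => z _; case: eqP => [->|]; rewrite ?mul0r.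
Qed.

Lemma PI_entropy : PI mu = entropyP mu - N%:R^-1 * \sum_(i < N) marg_entropy i.
Proof.
have pooled_gt0 i z : 0 < marg mu i z -> 0 < pooled mu z.
  move=> /lt_le_trans /(_ (marg_le_pooled i z)).
  by rewrite pmulr_rgt0 // ltr0n.
rewrite /PI.
under eq_bigr do under eq_bigr do rewrite (xlogxy_split _ _ (marg_ge0 _ _) (pooled_gt0 _ _)).
under eq_bigr do rewrite sumrB.
rewrite sumrB [X in _ - X]exchange_big /=.
under [X in _ - X]eq_bigr do rewrite -mulr_suml sum_marg_pooled -mulrA.
rewrite -mulr_sumr entropyPE /marg_entropy sumrN mulrN mulrBr mulKf //; lra.
Qed.

End Marginals.

Theorem mainTheorem4 (R : realType) (N Z : nat) (mu : {ffun outcome N Z -> R}) :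
  (0 < N)%N -> is_pmf mu ->
  PI mu <= entropyP mu - (N%:R ^+ 2)^-1 * \sum_(i < N) \sum_(j < N) mutinfo mu i j.
Proof.
move=> N_gt0 [mu_ge0 _]; rewrite (PI_entropy _ mu_ge0 N_gt0) lerD2l lerN2.
have -> : N%:R^-1 * \sum_(i < N) marg_entropy mu i =
    (N%:R ^+ 2)^-1 * (N%:R * \sum_(i < N) marg_entropy mu i) :> R.
  by rewrite expr2 invfM -mulrA mulKf // pnatr_eq0 -lt0n.
apply: ler_wpM2l; last exact: (sum_mutinfo_le _ mu_ge0).
by rewrite invr_ge0 exprn_ge0 ?ler0n.
Qed.
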